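(* Let $A,B,C$ be nonzero integers, $f(X)=AX+B+\frac{C}{X}$, and let $T$ be an indeterminate. Then, in $\mathbb{Q}(T)$, the triple \[(x,y,z)=\left(T,\ -\frac{(AT^2+BT+C)B}{(AT^2+(B+1)T+C)A},\ -\frac{(AT^2+(B+1)T+C)C}{BT}\right)\] satisfies $f(x)f(y)=f(z)$, as does the triple \[(x,y,z)=\left(T,\ -\frac{(AT^2+(B+1)T+C)C}{(AT^2+BT+C)B},\ -\frac{(AT^2+(B+1)T+C)C}{BT}\right).\] *)

From HB Require Import structures.
From mathcomp Require Import all_boot all_order all_algebra fraction.
Set Implicit Arguments. Unset Strict Implicit. Unset Printing Implicit Defensive.
Import Order.TTheory GRing.Theory Num.Theory.
Local Open Scope ring_scope.

Definition QT := {fraction {poly rat}}.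

Definition Tvar : QT := tofrac ('X : {poly rat}).

Definition fABC (A B C : int) (x : QT) : QT :=
  A%:~R * x + B%:~R + C%:~R / x.

(* Both identities hold over any field as identities of rational functions in
   a, b, c, T, so [field] checks them once the denominators are nonzero. In Q(T)
   the only denominators needing an argument are the quadratics P0 and P1, which
   are nonzero because their T^2-coefficient A is. *)
From HB Require Import structures.
From mathcomp Require Import all_boot all_order all_algebra fraction.
From mathcomp Require Import ring.
Import Order.TTheory GRing.Theory Num.Theory.
Local Open Scope ring_scope.

Section FieldIdentity.

Variables (F : fieldType) (a b c t : F).
Hypotheses (a_neq0 : a != 0) (b_neq0 : b != 0) (c_neq0 : c != 0) (t_neq0 : t != 0).

Let f (x : F) := a * x + b + c / x.
Let P0 := a * t ^+ 2 + b * t + c.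
Let P1 := a * t ^+ 2 + (b + 1) * t + c.
Let z := - (P1 * c) / (b * t).

Hypotheses (P0_neq0 : P0 != 0) (P1_neq0 : P1 != 0).

Lemma mul_f_first_solution : f t * f (- (P0 * b) / (P1 * a)) = f z.
Proof.
rewrite /f /z /P0 /P1; field.
by rewrite !oppr_eq0 !mulf_neq0 // t_neq0 b_neq0 a_neq0 andbT; exact: P1_neq0.
Qed.

Lemma mul_f_second_solution : f t * f (- (P1 * c) / (P0 * b)) = f z.
Proof.
rewrite /f /z /P0 /P1; field.
by rewrite !oppr_eq0 !mulf_neq0 // t_neq0 b_neq0; exact: P0_neq0.
Qed.

End FieldIdentity.

Lemma Tvar_neq0 : Tvar != 0.
Proof. by rewrite tofrac_eq0 polyX_eq0. Qed.

Lemma intr_QT (k : int) : (k%:~R : QT) = tofrac ((k%:~R : rat)%:P).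
Proof. by rewrite !rmorph_int. Qed.

Lemma intr_QT_neq0 {k : int} : k != 0 -> (k%:~R : QT) != 0.
Proof. by move=> k_neq0; rewrite intr_QT tofrac_eq0 polyC_eq0 intr_eq0. Qed.

Lemma quadratic_Tvar_neq0 {a : rat} (b c : rat) :
  a != 0 -> tofrac a%:P * Tvar ^+ 2 + tofrac b%:P * Tvar + tofrac c%:P != 0.
Proof.
move=> a_neq0; rewrite /Tvar expr2 -!tofracM -!tofracD tofrac_eq0 -expr2.
apply/eqP => /(congr1 (coefp 2)) /=.
rewrite !coefD !coefCM coefXn coefX coefC coef0 /= mulr1 mulr0 !addr0.
exact/eqP.
Qed.

Theorem mainTheorem5 (A B C : int) (hA : A != 0) (hB : B != 0) (hC : C != 0) :
  let T := Tvar in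
  let a : QT := A%:~R in
  let b : QT := B%:~R in
  let c : QT := C%:~R in
  let P0 := a * T ^+ 2 + b * T + c in
  let P1 := a * T ^+ 2 + (b + 1) * T + c in
  let z := - (P1 * c) / (b * T) in
  (fABC A B C T * fABC A B C (- (P0 * b) / (P1 * a)) = fABC A B C z) /\
  (fABC A B C T * fABC A B C (- (P1 * c) / (P0 * b)) = fABC A B C z).
Proof.
move=> T a b c P0 P1 z.
have A_neq0 : (A%:~R : rat) != 0 by rewrite intr_eq0.
have P0_neq0 : P0 != 0.
  by have := quadratic_Tvar_neq0 (B%:~R) (C%:~R) A_neq0; rewrite -!intr_QT.
have P1_neq0 : P1 != 0.
  have := quadratic_Tvar_neq0 (B%:~R + 1) (C%:~R) A_neq0.
  by rewrite polyCD tofracD rmorph1 -!intr_QT.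
split.
- exact: mul_f_first_solution (intr_QT_neq0 hA) (intr_QT_neq0 hB) (intr_QT_neq0 hC)
    Tvar_neq0 P0_neq0 P1_neq0.
- exact: mul_f_second_solution (intr_QT_neq0 hB) (intr_QT_neq0 hC) Tvar_neq0
    P0_neq0 P1_neq0.
Qed.
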